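(* Let $(A,*,\{\cdot,\cdot,\cdot\};\omega)$ be a quadratic pre-Lie-Yamaguti algebra. Then $\omega(\{x,y,z\}_D,w)=-\omega(z,[\![x,y,w]\!]_C)$ for all $x,y,z,w\in A$.
   Context: All vector spaces are over a field of characteristic $0$. A pre-Lie-Yamaguti algebra is a vector space $A$ with a bilinear operation $*$ and a trilinear operation $\{\cdot,\cdot,\cdot\}$ such that, writing $[x,y]_C=x*y-y*x$, $(x,y,z)=(x*y)*z-x*(y*z)$ and $\{x,y,z\}_D=\{z,y,x\}-\{z,x,y\}+(y,x,z)-(x,y,z)$, for all $x,y,z,w,t\in A$: (P1) $\{z,[x,y]_C,w\}-\{y*z,x,w\}+\{x*z,y,w\}=0$; (P2) $\{x,y,[z,w]_C\}=z*\{x,y,w\}-w*\{x,y,z\}$; (P3) $\{\{x,y,z\},w,t\}-\{\{x,y,w\},z,t\}-\{x,y,\{z,w,t\}_D\}-\{x,y,\{z,w,t\}\}+\{x,y,\{w,z,t\}\}+\{z,w,\{x,y,t\}\}_D=0$; (P4) $\{z,\{x,y,w\}_D,t\}+\{z,\{x,y,w\},t\}-\{z,\{y,x,w\},t\}+\{z,w,\{x,y,t\}_D\}+\{z,w,\{x,y,t\}\}-\{z,w,\{y,x,t\}\}=\{x,y,\{z,w,t\}\}_D-\{\{x,y,z\}_D,w,t\}$; (P5) $\{x,y,z\}_D*w+\{x,y,z\}*w-\{y,x,z\}*w=\{x,y,z*w\}_D-z*\{x,y,w\}_D$. Set $[\![x,y,z]\!]_C=\{x,y,z\}_D+\{x,y,z\}-\{y,x,z\}$.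 A quadratic pre-Lie-Yamaguti algebra is a pre-Lie-Yamaguti algebra with a nondegenerate skew-symmetric bilinear form $\omega$ such that $\omega(x*y,z)=-\omega(y,[x,z]_C)$ and $\omega(\{x,y,z\},w)=\omega(x,[\![w,z,y]\!]_C)$ for all $x,y,z,w\in A$. *)

From HB Require Import structures.
From mathcomp Require Import all_boot all_algebra.
Set Implicit Arguments. Unset Strict Implicit. Unset Printing Implicit Defensive.
Import GRing.Theory.
Local Open Scope ring_scope.

(* Pre-Lie-Yamaguti algebras over a field F of characteristic 0:
   A is an F-vector space (lmodType F), mul is the bilinear operation *,
   br is the trilinear operation {.,.,.}. *)
Section PLY.
Variables (F : fieldType) (A : lmodType F).

Definition bilinear_op (m : A -> A -> A) : Prop :=
  (forall (a : F) (x y z : A), m (a *: x + y) z = a *: m x z + m y z) /\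
  (forall (a : F) (x y z : A), m z (a *: x + y) = a *: m z x + m z y).

Definition trilinear_op (t : A -> A -> A -> A) : Prop :=
  (forall (a : F) (x y u v : A), t (a *: x + y) u v = a *: t x u v + t y u v) /\
  (forall (a : F) (x y u v : A), t u (a *: x + y) v = a *: t u x v + t u y v) /\
  (forall (a : F) (x y u v : A), t u v (a *: x + y) = a *: t u v x + t u v y).

Definition bilinear_form (om : A -> A -> F) : Prop :=
  (forall (a : F) (x y z : A), om (a *: x + y) z = a * om x z + om y z) /\
  (forall (a : F) (x y z : A), om z (a *: x + y) = a * om z x + om z y).

Variables (mul : A -> A -> A) (br : A -> A -> A -> A).

Definition comC x y := mul x y - mul y x.
Definition assoc x y z := mul (mul x y) z - mul x (mul y z).
Definition braceD x y z := br z y x - br z x y + assoc y x z - assoc x y z.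
Definition brackC x y z := braceD x y z + br x y z - br y x z.

Definition is_preLieYamaguti : Prop :=
  bilinear_op mul /\ trilinear_op br /\
  (forall x y z w,
     br z (comC x y) w - br (mul y z) x w + br (mul x z) y w = 0) /\
  (forall x y z w, br x y (comC z w) = mul z (br x y w) - mul w (br x y z)) /\
  (forall x y z w t,
     br (br x y z) w t - br (br x y w) z t - br x y (braceD z w t)
     - br x y (br z w t) + br x y (br w z t) + braceD z w (br x y t) = 0) /\
  (forall x y z w t,
     br z (braceD x y w) t + br z (br x y w) t - br z (br y x w) t
     + br z w (braceD x y t) + br z w (br x y t) - br z w (br y x t)
     = braceD x y (br z w t) - br (braceD x y z) w t) /\
  (forall x y z w,
     mul (braceD x y z) w + mul (br x y z) w - mul (br y x z) w
     = braceD x y (mul z w) - mul z (braceD x y w)).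

Definition is_quadratic_PLY (om : A -> A -> F) : Prop :=
  is_preLieYamaguti /\
  bilinear_form om /\
  (forall x y, om x y = - om y x) /\
  (forall x, (forall y, om x y = 0) -> x = 0) /\
  (forall x y z, om (mul x y) z = - om y (comC x z)) /\
  (forall x y z w, om (br x y z) w = om x (brackC w z y)).

End PLY.

From HB Require Import structures.
From mathcomp Require Import all_boot all_algebra.
From mathcomp Require Import ring.
Import GRing.Theory.
Local Open Scope ring_scope.

(* Invariance moves both operations across omega: omega({z,y,x}, w) =
   omega(z, [[w,x,y]]_C), and omega((a,b,c), d) = -omega(c, [ab,d]_C + [b,[a,d]_C]_C).
   Expanding {x,y,z}_D with these rules puts every summand in the form
   omega(z, _), and the collected second argument equals -[[x,y,w]]_C by a
   formal cancellation that uses only the bilinearity of *. *)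

Section QuadraticInvariance.
Variables (F : fieldType) (A : lmodType F).
Variables (mul : A -> A -> A) (br : A -> A -> A -> A) (om : A -> A -> F).
Hypothesis mul_bilinear : bilinear_op mul.
Hypothesis om_bilinear : bilinear_form om.
Hypothesis om_mul : forall x y z, om (mul x y) z = - om y (comC mul x z).
Hypothesis om_br :
  forall x y z w, om (br x y z) w = om x (brackC mul br w z y).

Lemma mulDl a b c : mul (a + b) c = mul a c + mul b c.
Proof. by have := mul_bilinear.1 1 a b c; rewrite !scale1r. Qed.

Lemma mulDr a b c : mul c (a + b) = mul c a + mul c b.
Proof. by have := mul_bilinear.2 1 a b c; rewrite !scale1r. Qed.

Lemma mul0l c : mul 0 c = 0.
Proof. by have := mul_bilinear.1 (-1) 0 0 c; rewrite scaler0 addr0 scaleN1r addNr. Qed.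

Lemma mul0r c : mul c 0 = 0.
Proof. by have := mul_bilinear.2 (-1) 0 0 c; rewrite scaler0 addr0 scaleN1r addNr. Qed.

Lemma mulNl a c : mul (- a) c = - mul a c.
Proof. by have := mul_bilinear.1 (-1) a 0 c; rewrite addr0 !scaleN1r mul0l addr0. Qed.

Lemma mulNr a c : mul c (- a) = - mul c a.
Proof. by have := mul_bilinear.2 (-1) a 0 c; rewrite addr0 !scaleN1r mul0r addr0. Qed.

Lemma omDl a b c : om (a + b) c = om a c + om b c.
Proof. by have := om_bilinear.1 1 a b c; rewrite scale1r mul1r. Qed.

Lemma omDr a b c : om c (a + b) = om c a + om c b.
Proof. by have := om_bilinear.2 1 a b c; rewrite scale1r mul1r. Qed.

Lemma om0l c : om 0 c = 0.
Proof. by have := om_bilinear.1 (-1) 0 0 c; rewrite scaler0 addr0 mulN1r addNr. Qed.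

Lemma om0r c : om c 0 = 0.
Proof. by have := om_bilinear.2 (-1) 0 0 c; rewrite scaler0 addr0 mulN1r addNr. Qed.

Lemma omNl a c : om (- a) c = - om a c.
Proof. by have := om_bilinear.1 (-1) a 0 c; rewrite addr0 scaleN1r om0l addr0 mulN1r. Qed.

Lemma omNr a c : om c (- a) = - om c a.
Proof. by have := om_bilinear.2 (-1) a 0 c; rewrite addr0 scaleN1r om0r addr0 mulN1r. Qed.

Definition assoc_adj a b d := comC mul (mul a b) d + comC mul b (comC mul a d).

Lemma om_assoc a b c d : om (assoc mul a b c) d = - om c (assoc_adj a b d).
Proof. by rewrite /assoc omDl omNl !om_mul /assoc_adj omDr; ring. Qed.

Lemma om_braceD x y z w :
  om (braceD mul br x y z) w =
  om z (brackC mul br w x y - brackC mul br w y x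
        + assoc_adj x y w - assoc_adj y x w).
Proof.
by rewrite /braceD omDl omNl omDl omDl omNl !om_br !om_assoc !(omDr, omNr); ring.
Qed.

Lemma om_braceD_brackC x y z w :
  om (braceD mul br x y z) w = - om z (brackC mul br x y w).
Proof.
rewrite om_braceD /brackC /braceD /assoc /assoc_adj /comC.
(* The br terms cancel pairwise, and so do the twelve cubic monomials in mul. *)
by rewrite !(mulDl, mulDr, mulNl, mulNr) !(omDr, omNr); ring.
Qed.

End QuadraticInvariance.

Theorem lemma4p11 (F : fieldType) (A : lmodType F)
  (mul : A -> A -> A) (br : A -> A -> A -> A) (om : A -> A -> F) :
  [pchar F] =i pred0 ->
  is_quadratic_PLY mul br om ->
  forall x y z w : A,
    om (braceD mul br x y z) w = - om z (brackC mul br x y w).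
Proof.
move=> _ [[mul_bilinear _] [om_bilinear [_ [_ [om_mul om_br]]]]].
exact: om_braceD_brackC.
Qed.
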